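(* (Deutsch–Wallace) Let $V$ be a real-valued function on the set of all games (as defined in the context) satisfying Constancy, Dominance, Additivity, Continuity, Indifference and 2-Fine-graining. Then for every game $G=(\boldsymbol{\alpha},\mathbf{r})$ with $n$ outcomes and $\boldsymbol{\alpha}\neq\mathbf{0}$, \[ V(G)=\frac{1}{\|\boldsymbol{\alpha}\|_2^2}\sum_{i=1}^n|\alpha_i|^2 r_i. \]
   Context: A game with $n$ outcomes ($n\ge1$) is a pair $G=(\boldsymbol{\alpha},\mathbf{r})$ with $\boldsymbol{\alpha}\in\mathbb{C}^n$ and $\mathbf{r}\in\mathbb{R}^n$, written as an $n\times2$ array with rows $(\alpha_i,r_i)$. $V$ assigns a real number to each game. Axioms: Constancy: if $r_i=r_1$ for all $i$, then $V(\boldsymbol{\alpha},\mathbf{r})=r_1$. Dominance: if $\mathbf{r}\ge\mathbf{r}'$ componentwise, then $V(\boldsymbol{\alpha},\mathbf{r})\ge V(\boldsymbol{\alpha},\mathbf{r}')$. Additivity: $V(\boldsymbol{\alpha},\mathbf{r}+\mathbf{r}')=V(\boldsymbol{\alpha},\mathbf{r})+V(\boldsymbol{\alpha},\mathbf{r}')$. Continuity: if games $G_k$ with $n$ outcomes converge to $G$ in the metric induced by $\|(\boldsymbol{\alpha},\mathbf{r})\|:=\|\boldsymbol{\alpha}\|_3+\|\mathbf{r}\|_1$, then $V(G)=\lim_k V(G_k)$. Indifference: for every permutation $\sigma$ of $\{1,\dots,n\}$, $V(\sigma(\boldsymbol{\alpha}),\sigma(\mathbf{r}))=V(\boldsymbol{\alpha},\mathbf{r})$,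 where $(\sigma(\mathbf{v}))_i=v_{\sigma(i)}$. 2-Fine-graining: for any game $G$ with rows $(\alpha_1,r_1),\dots,(\alpha_n,r_n)$ and any complex $\alpha_{11},\alpha_{12}$ with $\sqrt{|\alpha_{11}|^2+|\alpha_{12}|^2}=|\alpha_1|$, the game $G'$ with $n+1$ rows $(\alpha_{11},r_1),(\alpha_{12},r_1),(\alpha_2,r_2),\dots,(\alpha_n,r_n)$ satisfies $V(G')=V(G)$. *)

From Stdlib Require Import Reals List Permutation.
From Coquelicot Require Import Coquelicot.
Open Scope R_scope.

Definition game := list (C * R).

Definition alphas (G : game) : list C := map fst G.
Definition rewards (G : game) : list R := map snd G.

Definition mkgame (a : list C) (r : list R) : game := combine a r.

Definition vadd (r r' : list R) : list R :=
  map (fun p => fst p + snd p) (combine r r').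

Definition sumR (l : list R) : R := fold_right Rplus 0 l.

Definition norm3 (a : list C) : R :=
  let s := sumR (map (fun z => (Cmod z) ^ 3) a) in
  if Req_EM_T s 0 then 0 else Rpower s (1/3).

Definition norm1 (r : list R) : R := sumR (map Rabs r).

Definition game_dist (G H : game) : R :=
  norm3 (map (fun p => Cminus (fst p) (snd p)) (combine (alphas G) (alphas H)))
  + norm1 (map (fun p => fst p - snd p) (combine (rewards G) (rewards H))).

Definition norm2sq (a : list C) : R := sumR (map (fun z => (Cmod z) ^ 2) a).

Definition weighted (G : game) : R :=
  sumR (map (fun p => (Cmod (fst p)) ^ 2 * snd p) G).

(* The six axioms. Games have n >= 1 outcomes, i.e. are nonempty lists. *)
Definition Constancy (V : game -> R) : Prop :=
  forall (G : game) (r1 : R), G <> nil ->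
    (forall p, In p G -> snd p = r1) -> V G = r1.

Definition Dominance (V : game -> R) : Prop :=
  forall (a : list C) (r r' : list R), a <> nil ->
    length r = length a -> length r' = length a ->
    Forall2 (fun x y => x >= y) r r' ->
    V (mkgame a r) >= V (mkgame a r').

Definition Additivity (V : game -> R) : Prop :=
  forall (a : list C) (r r' : list R), a <> nil ->
    length r = length a -> length r' = length a ->
    V (mkgame a (vadd r r')) = V (mkgame a r) + V (mkgame a r').

Definition Continuity (V : game -> R) : Prop :=
  forall (Gk : nat -> game) (G : game), G <> nil ->
    (forall k, length (Gk k) = length G) ->
    is_lim_seq (fun k => game_dist (Gk k) G) 0 ->
    is_lim_seq (fun k => V (Gk k)) (V G).

Definition Indifference (V : game -> R) : Prop :=
  forall (G G' : game), G <> nil -> Permutation G G' -> V G' = V G.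

Definition FineGraining2 (V : game -> R) : Prop :=
  forall (a1 a11 a12 : C) (r1 : R) (rest : game),
    sqrt ((Cmod a11) ^ 2 + (Cmod a12) ^ 2) = Cmod a1 ->
    V ((a11, r1) :: (a12, r1) :: rest) = V ((a1, r1) :: rest).

From Stdlib Require Import Reals List Permutation Lra Lia.
From Coquelicot Require Import Coquelicot.
Open Scope R_scope.

(* In a game whose n amplitudes are all equal, Indifference and Additivity make the
   reward lam on any k of the outcomes worth k lam / n, and 2-Fine-graining merges a
   block of equal-reward outcomes into a single one whose amplitude is the 2-norm of
   the block.  Hence the two-outcome game ((x, lam), (y, 0)) is worth
   lam x^2 / (x^2 + y^2) whenever x^2 : y^2 is rational.  Dominance makes this value
   monotone in x along the circle x^2 + y^2 = T, which squeezes the irrational case from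
   below; the complementary game ((x, 0), (y, lam)) gives the bound from above.
   Additivity finally splits any game into games with a single nonzero reward, each of
   which collapses to a two-outcome game. *)

Definition with_reward (r : R) (a : list C) : game := map (fun z => (z, r)) a.

Fixpoint add_rewards (G H : game) : game :=
  match G, H with
  | (a, x) :: G', (_, y) :: H' => (a, x + y) :: add_rewards G' H'
  | _, _ => nil
  end.

Lemma alphas_app (G H : game) : alphas (G ++ H) = alphas G ++ alphas H.
Proof. apply map_app. Qed.

Lemma alphas_with_reward (r : R) (a : list C) : alphas (with_reward r a) = a.
Proof. unfold alphas, with_reward; rewrite map_map; apply map_id. Qed.

Lemma length_with_reward (r : R) (a : list C) : length (with_reward r a) = length a.
Proof. apply length_map. Qed.

Lemma with_reward_app (r : R) (a b : list C) :
  with_reward r (a ++ b) = with_reward r a ++ with_reward r b.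
Proof. apply map_app. Qed.

Lemma mkgame_alphas_rewards (G : game) : mkgame (alphas G) (rewards G) = G.
Proof.
  unfold mkgame, alphas, rewards.
  induction G as [|[a r] G IH]; [reflexivity|]; cbn; now rewrite IH.
Qed.

Lemma mkgame_vadd (G H : game) :
  mkgame (alphas G) (vadd (rewards G) (rewards H)) = add_rewards G H.
Proof.
  unfold mkgame, vadd, alphas, rewards; revert H.
  induction G as [|[a x] G IH]; intros [|[b y] H]; [reflexivity..|].
  cbn; now rewrite <- IH.
Qed.

Lemma add_rewards_app (G G' H H' : game) : length G = length G' ->
  add_rewards (G ++ H) (G' ++ H') = add_rewards G G' ++ add_rewards H H'.
Proof.
  revert G'; induction G as [|[a x] G IH]; intros [|[b y] G'] Hlen; try discriminate;
    [reflexivity|].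
  cbn; rewrite IH; auto.
Qed.

Lemma add_rewards_with_reward (r s : R) (a : list C) :
  add_rewards (with_reward r a) (with_reward s a) = with_reward (r + s) a.
Proof. unfold with_reward; induction a as [|z a IH]; [reflexivity|]; cbn; now rewrite IH. Qed.

Lemma add_rewards_null_l (G : game) : add_rewards (with_reward 0 (alphas G)) G = G.
Proof.
  unfold with_reward, alphas.
  induction G as [|[a x] G IH]; [reflexivity|]; cbn; now rewrite IH, Rplus_0_l.
Qed.

Lemma Cmod_RtoC_nonneg (x : R) : 0 <= x -> Cmod (RtoC x) = x.
Proof. intro Hx; rewrite Cmod_R; now apply Rabs_pos_eq. Qed.

Lemma norm2sq_cons (c : C) (a : list C) : norm2sq (c :: a) = Cmod c ^ 2 + norm2sq a.
Proof. reflexivity. Qed.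

Lemma norm2sq_app (a b : list C) : norm2sq (a ++ b) = norm2sq a + norm2sq b.
Proof.
  induction a as [|z a IH]; cbn [app]; [unfold norm2sq, sumR; cbn; ring|].
  rewrite !norm2sq_cons, IH; ring.
Qed.

Lemma norm2sq_repeat (c : C) (n : nat) : norm2sq (repeat c n) = INR n * Cmod c ^ 2.
Proof.
  induction n as [|n IH]; [unfold norm2sq, sumR; cbn; ring|].
  cbn [repeat]; rewrite norm2sq_cons, IH, S_INR; ring.
Qed.

Lemma norm2sq_nonneg (a : list C) : 0 <= norm2sq a.
Proof.
  induction a as [|z a IH]; [unfold norm2sq, sumR; cbn; lra|].
  rewrite norm2sq_cons; pose proof (pow2_ge_0 (Cmod z)); lra.
Qed.

Lemma norm2sq_pos (a : list C) (z : C) : In z a -> z <> 0%C -> 0 < norm2sq a.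
Proof.
  intros Hin Hz; induction a as [|w a IH]; [destruct Hin|].
  rewrite norm2sq_cons; pose proof (pow2_ge_0 (Cmod w)); pose proof (norm2sq_nonneg a).
  destruct Hin as [<-|Hin]; [|specialize (IH Hin); lra].
  apply Cmod_gt_0 in Hz; pose proof (pow_lt _ 2 Hz); lra.
Qed.

Lemma Rle_0_of_bounded_multiples (a b : R) : (forall n : nat, a * INR n <= b) -> a <= 0.
Proof.
  intro Hb; apply Rnot_lt_le; intro Ha.
  destruct (INR_unbounded (b / a)) as [n Hn].
  specialize (Hb n); apply (Rmult_lt_compat_l a) in Hn; [|exact Ha].
  field_simplify in Hn; lra.
Qed.

Lemma Rle_of_rational_lower_bounds (lam t g : R) :
  0 <= lam -> 0 <= t <= 1 -> 0 <= g ->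
  (forall p n : nat, (0 < p < n)%nat -> INR p <= t * INR n -> lam * INR p <= g * INR n) ->
  lam * t <= g.
Proof.
  intros Hlam Ht Hg Hrat.
  assert (Hrat0 : forall p n : nat, (p < n)%nat -> INR p <= t * INR n ->
            lam * INR p <= g * INR n).
  { intros [|p] n Hpn Hp; [|apply Hrat; [lia|exact Hp]].
    pose proof (pos_INR n); rewrite Rmult_0_r; apply Rmult_le_pos; assumption. }
  enough (Hn : forall n : nat, (lam * t - g) * INR (S n) <= lam).
  { apply Rminus_le, Rle_0_of_bounded_multiples with (b := lam + lam); intros [|n].
    - simpl; lra.
    - specialize (Hn n); lra. }
  intro n; set (N := INR (S n)).
  assert (HN : N = INR n + 1) by apply S_INR.
  assert (Hn0 : 0 <= INR n) by apply pos_INR.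
  assert (HtN : 0 <= t * N) by nra.
  destruct (nfloor_ex _ HtN) as [m [Hm1 Hm2]].
  assert (Hp : exists p : nat, (p < S n)%nat /\ INR p <= t * N /\ t * N <= INR p + 1).
  { destruct (Compare_dec.lt_dec m (S n)) as [Hlt|Hge]; [exists m; split; [exact Hlt|lra]|].
    exists n; repeat split; [lia| |nra].
    assert (HmN : N <= INR m) by (unfold N; apply le_INR; lia); lra. }
  destruct Hp as [p [Hpn [Hp1 Hp2]]].
  specialize (Hrat0 p (S n) Hpn Hp1); fold N in Hrat0; nra.
Qed.

Section DeutschWallace.

Variable V : game -> R.
Hypotheses (HC : Constancy V) (HD : Dominance V) (HA : Additivity V)
  (HI : Indifference V) (HF : FineGraining2 V).

Lemma V_perm (G G' : game) : Permutation G G' -> V G' = V G.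
Proof.
  intro Hp; destruct G as [|p G].
  - now rewrite (Permutation_nil Hp).
  - apply HI; [discriminate|exact Hp].
Qed.

Lemma V_const (r : R) (a : list C) : a <> nil -> V (with_reward r a) = r.
Proof.
  intro Ha; apply HC.
  - destruct a; [contradiction|discriminate].
  - intros p Hp; apply in_map_iff in Hp; destruct Hp as [z [<- _]]; reflexivity.
Qed.

Lemma V_add (G H : game) : G <> nil -> alphas G = alphas H ->
  V (add_rewards G H) = V G + V H.
Proof.
  intros HG Ha.
  assert (Hlen : forall K : game, length (rewards K) = length (alphas K))
    by (intro K; unfold rewards, alphas; now rewrite !length_map).
  rewrite <- mkgame_vadd, HA.
  - now rewrite mkgame_alphas_rewards, Ha, mkgame_alphas_rewards.
  - destruct G; [contradiction|discriminate].
  - apply Hlen.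
  - rewrite Ha; apply Hlen.
Qed.

Lemma V_phase (c : C) (r : R) (rest : game) :
  V ((c, r) :: rest) = V ((RtoC (Cmod c), r) :: rest).
Proof.
  assert (Hc : sqrt (Cmod c ^ 2 + Cmod 0 ^ 2) = Cmod c).
  { rewrite Cmod_0, pow_i, Rplus_0_r by lia; apply sqrt_pow2, Cmod_ge_0. }
  rewrite <- (HF c c 0%C r rest Hc).
  apply HF; rewrite Hc, Cmod_RtoC_nonneg; [reflexivity|apply Cmod_ge_0].
Qed.

Lemma V_merge_head (r : R) (d : C) (L : list C) (rest : game) :
  V (with_reward r (d :: L) ++ rest) = V ((RtoC (sqrt (norm2sq (d :: L))), r) :: rest).
Proof.
  revert d; induction L as [|c L IH]; intro d.
  - rewrite norm2sq_cons; unfold norm2sq, sumR; cbn [map fold_right].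
    rewrite Rplus_0_r, sqrt_pow2 by apply Cmod_ge_0; apply V_phase.
  - set (s := sqrt (Cmod d ^ 2 + Cmod c ^ 2)).
    assert (Hs : 0 <= s) by apply sqrt_pos.
    assert (Hs2 : Cmod (RtoC s) ^ 2 = Cmod d ^ 2 + Cmod c ^ 2).
    { rewrite Cmod_RtoC_nonneg by exact Hs; apply pow2_sqrt.
      pose proof (pow2_ge_0 (Cmod d)); pose proof (pow2_ge_0 (Cmod c)); lra. }
    cbn [with_reward map app]; fold (with_reward r L).
    rewrite (HF (RtoC s)) by (rewrite Cmod_RtoC_nonneg; auto).
    specialize (IH (RtoC s)); cbn [with_reward map app] in IH; fold (with_reward r L) in IH.
    rewrite IH, !norm2sq_cons, Hs2, Rplus_assoc; reflexivity.
Qed.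

Lemma V_merge (pre post : game) (r : R) (d : C) (L : list C) :
  V (pre ++ with_reward r (d :: L) ++ post) =
  V (pre ++ (RtoC (sqrt (norm2sq (d :: L))), r) :: post).
Proof.
  rewrite (V_perm _ _ (Permutation_app_comm (with_reward r (d :: L) ++ post) pre)).
  rewrite (V_perm _ _ (Permutation_app_comm ((RtoC (sqrt (norm2sq (d :: L))), r) :: post) pre)).
  rewrite <- !app_assoc; apply V_merge_head.
Qed.

Lemma V_uniform_split (c : C) (lam : R) (n k j : nat) : (k + j = S n)%nat ->
  V (with_reward lam (repeat c k) ++ with_reward 0 (repeat c j)) =
  INR k * V ((c, lam) :: with_reward 0 (repeat c n)).
Proof.
  revert j; induction k as [|k IH]; intros j Hkj.
  - change (V (with_reward 0 (repeat c j)) = 0 * V ((c, lam) :: with_reward 0 (repeat c n))).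
    rewrite V_const by (destruct j; discriminate); ring.
  - set (zeros := with_reward 0 (repeat c j)).
    assert (Hsplit : with_reward lam (repeat c (S k)) ++ zeros =
      add_rewards ((c, lam) :: with_reward 0 (repeat c k) ++ zeros)
                  ((c, 0) :: with_reward lam (repeat c k) ++ zeros)).
    { cbn [add_rewards]; rewrite add_rewards_app by now rewrite !length_with_reward.
      unfold zeros; rewrite !add_rewards_with_reward, !Rplus_0_l, Rplus_0_r; reflexivity. }
    rewrite Hsplit, V_add by (try discriminate; cbn; rewrite !alphas_app, !alphas_with_reward; reflexivity).
    rewrite <- (V_perm _ _ (Permutation_middle (with_reward lam (repeat c k)) zeros (c, 0))).
    change ((c, 0) :: zeros) with (with_reward 0 (repeat c (S j))).
    rewrite IH by lia.
    unfold zeros; rewrite <- with_reward_app, <- repeat_app.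
    replace (k + j)%nat with n by lia.
    rewrite S_INR; ring.
Qed.

Lemma V_uniform (c : C) (lam : R) (k j : nat) : (0 < k + j)%nat ->
  V (with_reward lam (repeat c k) ++ with_reward 0 (repeat c j)) =
  lam * INR k / INR (k + j).
Proof.
  intro Hkj; destruct (k + j)%nat as [|n] eqn:Hn; [lia|].
  assert (Hall : INR (S n) * V ((c, lam) :: with_reward 0 (repeat c n)) = lam).
  { rewrite <- (V_uniform_split c lam n (S n) 0) by lia.
    rewrite app_nil_r; apply V_const; discriminate. }
  rewrite (V_uniform_split c lam n k j Hn).
  assert (HSn : INR (S n) <> 0) by (apply not_0_INR; discriminate).
  apply (Rmult_eq_reg_l (INR (S n))); [|exact HSn].
  rewrite <- Rmult_assoc, (Rmult_comm _ (INR k)), Rmult_assoc, Hall; field; exact HSn.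
Qed.


Definition V2 (lam x y : R) : R := V ((RtoC x, lam) :: (RtoC y, 0) :: nil).

Lemma V2_rational (lam u : R) (p q : nat) : 0 <= u -> (0 < p)%nat -> (0 < q)%nat ->
  V2 lam (sqrt (INR p * u)) (sqrt (INR q * u)) = lam * INR p / INR (p + q).
Proof.
  intros Hu Hp Hq; set (c := RtoC (sqrt u)).
  assert (Hc : Cmod c ^ 2 = u)
    by (unfold c; rewrite Cmod_RtoC_nonneg by apply sqrt_pos; now apply pow2_sqrt).
  rewrite <- (V_uniform c lam p q) by lia.
  destruct p as [|p]; [lia|]; destruct q as [|q]; [lia|].
  change (repeat c (S p)) with (c :: repeat c p); rewrite V_merge_head.
  pose proof (V_merge ((RtoC (sqrt (norm2sq (c :: repeat c p))), lam) :: nil) nil 0 c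
    (repeat c q)) as Hmerge.
  cbn [app] in Hmerge; rewrite app_nil_r in Hmerge.
  change (c :: repeat c q) with (repeat c (S q)) in Hmerge; rewrite Hmerge.
  change (c :: repeat c p) with (repeat c (S p)).
  unfold V2; rewrite !norm2sq_repeat, Hc; reflexivity.
Qed.

Lemma V2_ge0 (lam x y : R) : 0 <= lam -> 0 <= V2 lam x y.
Proof.
  intro Hlam.
  pose proof (HD (RtoC x :: RtoC y :: nil) (lam :: 0 :: nil) (0 :: 0 :: nil)) as Hdom.
  unfold mkgame in Hdom; cbn [combine] in Hdom.
  change ((RtoC x, 0) :: (RtoC y, 0) :: nil) with (with_reward 0 (RtoC x :: RtoC y :: nil))
    in Hdom.
  rewrite V_const in Hdom by discriminate.
  apply Rge_le, Hdom; [discriminate|reflexivity|reflexivity|].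
  repeat (apply Forall2_cons; [lra|]); apply Forall2_nil.
Qed.

Lemma V2_mono (lam x y x' y' : R) : 0 <= lam -> 0 <= x <= x' -> 0 <= y -> 0 <= y' ->
  x ^ 2 + y ^ 2 = x' ^ 2 + y' ^ 2 -> V2 lam x y <= V2 lam x' y'.
Proof.
  intros Hlam [Hx Hxx'] Hy Hy' Hsum.
  set (c := sqrt (x' ^ 2 - x ^ 2)).
  assert (Hc2 : c ^ 2 = x' ^ 2 - x ^ 2) by (apply pow2_sqrt; nra).
  assert (Hc : 0 <= c) by apply sqrt_pos.
  pose proof (HD (RtoC x :: RtoC c :: RtoC y' :: nil) (lam :: lam :: 0 :: nil)
    (lam :: 0 :: 0 :: nil)) as Hdom.
  unfold mkgame in Hdom; cbn [combine] in Hdom.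
  pose proof (V_merge nil ((RtoC y', 0) :: nil) lam (RtoC x) (RtoC c :: nil)) as Hmerge1.
  pose proof (V_merge ((RtoC x, lam) :: nil) nil 0 (RtoC c) (RtoC y' :: nil)) as Hmerge2.
  cbn [app with_reward map] in Hmerge1, Hmerge2.
  assert (Hx' : sqrt (norm2sq (RtoC x :: RtoC c :: nil)) = x').
  { rewrite !norm2sq_cons, !Cmod_RtoC_nonneg by assumption; change (norm2sq nil) with 0.
    rewrite Rplus_0_r, Hc2; replace (x ^ 2 + (x' ^ 2 - x ^ 2)) with (x' ^ 2) by ring.
    apply sqrt_pow2; lra. }
  assert (Hy'' : sqrt (norm2sq (RtoC c :: RtoC y' :: nil)) = y).
  { rewrite !norm2sq_cons, !Cmod_RtoC_nonneg by assumption; change (norm2sq nil) with 0.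
    rewrite Rplus_0_r, Hc2; replace (x' ^ 2 - x ^ 2 + y' ^ 2) with (y ^ 2) by lra.
    now apply sqrt_pow2. }
  unfold V2; rewrite <- Hx', <- Hy'', <- Hmerge1, <- Hmerge2.
  apply Rge_le, Hdom; [discriminate|reflexivity|reflexivity|].
  repeat (apply Forall2_cons; [lra|]); apply Forall2_nil.
Qed.


Lemma V2_lower (lam x y : R) : 0 <= lam -> 0 <= x -> 0 <= y -> 0 < x ^ 2 + y ^ 2 ->
  lam * (x ^ 2 / (x ^ 2 + y ^ 2)) <= V2 lam x y.
Proof.
  intros Hlam Hx Hy HT; set (T := x ^ 2 + y ^ 2) in *.
  assert (Hx2 : 0 <= x ^ 2) by nra; assert (Hy2 : 0 <= y ^ 2) by nra.
  apply Rle_of_rational_lower_bounds; [exact Hlam| split |apply V2_ge0, Hlam|].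
  - apply Rdiv_le_0_compat; lra.
  - apply (Rmult_le_reg_r T); [exact HT|].
    unfold Rdiv; rewrite Rmult_assoc, Rinv_l, Rmult_1_r, Rmult_1_l by lra; unfold T; lra.
  - intros p n Hpn Hp.
    assert (Hn : 0 < INR n) by (apply lt_0_INR; lia).
    set (u := T / INR n).
    assert (Hu : 0 <= u) by (apply Rdiv_le_0_compat; lra).
    pose proof (V2_rational lam u p (n - p) Hu ltac:(lia) ltac:(lia)) as Hval.
    replace (p + (n - p))%nat with n in Hval by lia.
    assert (Hpu : INR p * u <= x ^ 2).
    { apply (Rmult_le_compat_r T) in Hp; [|lra].
      replace (x ^ 2 / T * INR n * T) with (x ^ 2 * INR n) in Hp by (field; lra).
      apply (Rmult_le_reg_r (INR n)); [exact Hn|].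
      unfold u; replace (INR p * (T / INR n) * INR n) with (INR p * T) by (field; lra).
      exact Hp. }
    assert (Hmono : V2 lam (sqrt (INR p * u)) (sqrt (INR (n - p) * u)) <= V2 lam x y).
    { apply V2_mono; [exact Hlam| split; [apply sqrt_pos|] |apply sqrt_pos|exact Hy|].
      - rewrite <- (sqrt_pow2 x Hx); now apply sqrt_le_1_alt.
      - pose proof (pos_INR p).
        rewrite !pow2_sqrt, minus_INR by (try apply Rmult_le_pos; try lia; try apply pos_INR; lra).
        unfold u, T; field; lra. }
    rewrite Hval in Hmono.
    apply (Rmult_le_compat_r (INR n)) in Hmono; [|lra].
    replace (lam * INR p / INR n * INR n) with (lam * INR p) in Hmono by (field; lra).
    exact Hmono.
Qed.

Lemma V2_complement (lam x y : R) : V2 lam x y + V2 lam y x = lam.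
Proof.
  unfold V2.
  rewrite (V_perm ((RtoC x, 0) :: (RtoC y, lam) :: nil) ((RtoC y, lam) :: (RtoC x, 0) :: nil))
    by apply perm_swap.
  rewrite <- V_add by (reflexivity || discriminate).
  cbn [add_rewards]; rewrite Rplus_0_r, Rplus_0_l.
  change ((RtoC x, lam) :: (RtoC y, lam) :: nil) with (with_reward lam (RtoC x :: RtoC y :: nil)).
  apply V_const; discriminate.
Qed.

Lemma V2_opp (lam x y : R) : V2 (- lam) x y = - V2 lam x y.
Proof.
  unfold V2.
  pose proof (V_add ((RtoC x, lam) :: (RtoC y, 0) :: nil) ((RtoC x, - lam) :: (RtoC y, 0) :: nil)
    ltac:(discriminate) eq_refl) as Hsum.
  cbn [add_rewards] in Hsum; rewrite Rplus_opp_r, Rplus_0_r in Hsum.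
  change ((RtoC x, 0) :: (RtoC y, 0) :: nil) with (with_reward 0 (RtoC x :: RtoC y :: nil))
    in Hsum.
  rewrite V_const in Hsum by discriminate; lra.
Qed.

Lemma V2_eq_nonneg (lam x y : R) : 0 <= lam -> 0 <= x -> 0 <= y -> 0 < x ^ 2 + y ^ 2 ->
  V2 lam x y = lam * x ^ 2 / (x ^ 2 + y ^ 2).
Proof.
  intros Hlam Hx Hy HT.
  pose proof (V2_lower lam x y Hlam Hx Hy HT) as Hxy.
  pose proof (V2_lower lam y x Hlam Hy Hx ltac:(lra)) as Hyx.
  pose proof (V2_complement lam x y) as Hcompl.
  replace (lam * (y ^ 2 / (y ^ 2 + x ^ 2))) with (lam - lam * (x ^ 2 / (x ^ 2 + y ^ 2)))
    in Hyx by (field; lra).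
  unfold Rdiv in *; rewrite Rmult_assoc; lra.
Qed.

Lemma V2_eq (lam x y : R) : 0 <= x -> 0 <= y -> 0 < x ^ 2 + y ^ 2 ->
  V2 lam x y = lam * x ^ 2 / (x ^ 2 + y ^ 2).
Proof.
  intros Hx Hy HT; destruct (Rle_dec 0 lam) as [Hlam|Hlam].
  - now apply V2_eq_nonneg.
  - rewrite <- (Ropp_involutive lam), V2_opp, V2_eq_nonneg by (auto; lra).
    field; lra.
Qed.

Lemma V_single (c : C) (lam : R) (P : list C) : 0 < norm2sq (c :: P) ->
  V ((c, lam) :: with_reward 0 P) = lam * Cmod c ^ 2 / norm2sq (c :: P).
Proof.
  rewrite norm2sq_cons; intro Hpos; destruct P as [|d L].
  - change ((c, lam) :: with_reward 0 nil) with (with_reward lam (c :: nil)).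
    rewrite V_const by discriminate; change (norm2sq nil) with 0 in *.
    rewrite Rplus_0_r in *; unfold Rdiv; rewrite Rmult_assoc, Rinv_r, Rmult_1_r by lra.
    reflexivity.
  - pose proof (V_merge ((c, lam) :: nil) nil 0 d L) as Hmerge.
    cbn [app] in Hmerge; rewrite app_nil_r in Hmerge.
    pose proof (norm2sq_nonneg (d :: L)); pose proof (Cmod_ge_0 c).
    rewrite Hmerge, V_phase; fold (V2 lam (Cmod c) (sqrt (norm2sq (d :: L)))).
    rewrite V2_eq, pow2_sqrt by (try apply sqrt_pos; try rewrite pow2_sqrt; lra).
    reflexivity.
Qed.

Lemma V_decomp (Q : game) (P : list C) : 0 < norm2sq (P ++ alphas Q) ->
  V (with_reward 0 P ++ Q) = weighted Q / norm2sq (P ++ alphas Q).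
Proof.
  revert P; induction Q as [|[c lam] Q IH]; intros P Hpos.
  - change (alphas nil) with (@nil C) in *; rewrite !app_nil_r in *.
    rewrite V_const.
    + unfold weighted, sumR; cbn; unfold Rdiv; ring.
    + intros ->; change (norm2sq nil) with 0 in Hpos; lra.
  - change (alphas ((c, lam) :: Q)) with (c :: alphas Q) in *.
    assert (Hsplit : with_reward 0 P ++ (c, lam) :: Q =
      add_rewards (with_reward 0 P ++ (c, lam) :: with_reward 0 (alphas Q))
                  (with_reward 0 (P ++ c :: nil) ++ Q)).
    { rewrite with_reward_app, <- app_assoc, add_rewards_app by reflexivity.
      rewrite add_rewards_with_reward, Rplus_0_r; f_equal.
      change (with_reward 0 (c :: nil) ++ Q) with ((c, 0) :: Q); cbn [add_rewards].
      now rewrite Rplus_0_r, add_rewards_null_l. }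
    assert (Hnorm1 : norm2sq (c :: P ++ alphas Q) = norm2sq (P ++ c :: alphas Q))
      by (rewrite norm2sq_cons, !norm2sq_app, norm2sq_cons; ring).
    assert (Hnorm2 : norm2sq ((P ++ c :: nil) ++ alphas Q) = norm2sq (P ++ c :: alphas Q))
      by (rewrite <- app_assoc; reflexivity).
    rewrite Hsplit, V_add.
    + rewrite (V_perm ((c, lam) :: with_reward 0 P ++ with_reward 0 (alphas Q)))
        by apply Permutation_middle.
      rewrite <- with_reward_app, V_single, IH, Hnorm1, Hnorm2 by (rewrite ?Hnorm1, ?Hnorm2; exact Hpos).
      change (weighted ((c, lam) :: Q)) with (Cmod c ^ 2 * lam + weighted Q).
      field; lra.
    + intro Hnil; apply app_eq_nil in Hnil; destruct Hnil as [_ Hnil]; discriminate.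
    + rewrite !alphas_app; change (alphas ((c, lam) :: ?W)) with (c :: alphas W).
      rewrite !alphas_with_reward, <- app_assoc; reflexivity.
Qed.

Lemma V_eq_weighted (G : game) : 0 < norm2sq (alphas G) ->
  V G = weighted G / norm2sq (alphas G).
Proof. exact (V_decomp G nil). Qed.

End DeutschWallace.

Theorem theorem4 (V : game -> R) :
  Constancy V -> Dominance V -> Additivity V -> Continuity V ->
  Indifference V -> FineGraining2 V ->
  forall G : game, G <> nil ->
    (exists z, In z (alphas G) /\ z <> 0%C) ->
    V G = weighted G / norm2sq (alphas G).
Proof.
  intros HC HD HA _ HI HF G _ [z [Hz Hz0]].
  exact (V_eq_weighted V HC HD HA HI HF G (norm2sq_pos _ _ Hz Hz0)).
Qed.
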